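(* Let $p$ be a prime and $Q\in\mathbb{Q}_p[X_1,\dots,X_n]$ any quadratic form. Then: (i) each of the sets $Q(\mathbb{Q}_p^n)\setminus\{0\}$ and $R(Q(\mathbb{Q}_p^n))\setminus\{0\}$ is a union of cosets of $(\mathbb{Q}_p^* )^2$ in $\mathbb{Q}_p^*$ (i.e. of elements of $\mathbb{Q}_p^*/(\mathbb{Q}_p^* )^2$); (ii) the set $R(Q(\mathbb{Z}^n))$ is dense in $\mathbb{Q}_p$ if and only if $R(Q(\mathbb{Q}_p^n))=\mathbb{Q}_p$.
   Context: A quadratic form is a homogeneous polynomial of degree two, not all coefficients zero. $\mathbb{Q}_p^*$ is the multiplicative group of $\mathbb{Q}_p$ and $(\mathbb{Q}_p^* )^2$ its subgroup of nonzero squares. For a subset $A$ of a field, $R(A)=\{a/b: a,b\in A,\ b\neq 0\}$. For $S\subseteq\mathbb{Q}_p^n$, $Q(S)=\{Q(\mathbf{x}):\mathbf{x}\in S\}$. Density is with respect to the $p$-adic topology. *)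

From HB Require Import structures.
From mathcomp Require Import all_boot all_order all_algebra.
From mathcomp Require Export mpoly.
Set Implicit Arguments. Unset Strict Implicit. Unset Printing Implicit Defensive.
Import Order.TTheory GRing.Theory Num.Theory.
Local Open Scope ring_scope.

Definition padic_abs_rat (p : nat) (q : rat) : rat :=
  if q == 0 then 0
  else (p%:R : rat) ^ ((logn p `|denq q|%N)%:Z - (logn p `|numq q|%N)%:Z).

(* (K, v) is (a model of) the field Q_p of p-adic numbers: K is a field
   (containing Q via ratr) with a non-archimedean absolute value v
   (values in Q, as those of |.|_p on Q_p are powers of p) extending |.|_p
   on Q, complete with respect to v, and in which Q is dense.
   This characterizes Q_p uniquely up to isometric field isomorphism
   (Q_p is by definition the completion of Q for |.|_p). *)
Definition is_Qp (p : nat) (K : fieldType) (v : K -> rat) : Prop :=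
  ((forall x, 0 <= v x) /\ (forall x, v x = 0 <-> x = 0)) /\
      (forall x y, v (x * y) = v x * v y) /\
      (forall x y, v (x + y) <= Num.max (v x) (v y)) /\
      (forall q : rat, v (ratr q) = padic_abs_rat p q) /\
      (forall u : nat -> K,
         (forall e : rat, 0 < e -> exists N, forall m k, (N <= m)%N -> (N <= k)%N ->
              v (u m - u k) < e) ->
         exists l, forall e : rat, 0 < e -> exists N, forall m, (N <= m)%N -> v (u m - l) < e) /\
    (forall (x : K) (e : rat), 0 < e -> exists q : rat, v (x - ratr q) < e).

Definition quadratic_form (K : fieldType) (n : nat) (Q : {mpoly K[n]}) : Prop :=
  Q != 0 /\ Q \is 2.-homog.

Definition qimage (K : fieldType) (n : nat) (Q : {mpoly K[n]})
  (S : ('I_n -> K) -> Prop) : K -> Prop :=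
  fun y => exists x, S x /\ y = Q.@[x].

Definition ratio_set (K : fieldType) (A : K -> Prop) : K -> Prop :=
  fun y => exists a b, A a /\ A b /\ b != 0 /\ y = a / b.

Definition setminus0 (K : fieldType) (A : K -> Prop) : K -> Prop :=
  fun y => A y /\ y != 0.

(* A is a union of cosets of (K^* )^2 in K^* : A ⊆ K^* and A is stable
   under multiplication by nonzero squares. *)
Definition union_of_square_classes (K : fieldType) (A : K -> Prop) : Prop :=
  (forall a, A a -> a != 0) /\
  (forall a c, A a -> c != 0 -> A (a * c ^+ 2)).

Definition dense_for (K : fieldType) (v : K -> rat) (A : K -> Prop) : Prop :=
  forall (x : K) (e : rat), 0 < e -> exists y, A y /\ v (x - y) < e.

Definition int_points (K : fieldType) (n : nat) : ('I_n -> K) -> Prop :=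
  fun x => exists z : 'I_n -> int, forall i, x i = (z i)%:~R.

From mathcomp Require Import all_boot all_order all_algebra.
From mathcomp Require Import mpoly ring lra.
Set Implicit Arguments. Unset Strict Implicit. Unset Printing Implicit Defensive.
Import Order.TTheory GRing.Theory Num.Theory.
Local Open Scope ring_scope.

(* Part (i) is homogeneity: Q(c x) = c^2 Q(x).

   For (ii), if every element of Q_p is a ratio of values of Q, then by
   continuity of Q and of division, ratios of values at rational points are
   dense; scaling two rational points by a common denominator c turns them
   into integral points without changing the ratio, since c^2 cancels.

   Conversely, square classes are open: if |y - z| <= |4| |y| / 2 then
   y = z (1 + 4c) with |c| <= 1/2, and 1 + 4c = (1 + 2l)^2 where l = c - l^2
   is the limit of the contracting iteration l -> c - l^2. So if R(Q(Z^n)) is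
   dense it meets every square class, and R(Q(Q_p^n)), which contains it and
   is stable under multiplication by squares by (i), contains every nonzero
   element, as well as 0 = Q(0)/Q(x). *)

Lemma meval_homog2_scale (K : fieldType) n (Q : {mpoly K[n]}) (c : K) (x : 'I_n -> K) :
  Q \is 2.-homog -> Q.@[fun i => c * x i] = c ^+ 2 * Q.@[x].
Proof.
move=> /dhomogP hQ; rewrite !mevalE big_distrr /=.
apply: eq_big_seq => m /hQ hm; rewrite mulrCA; congr (_ * _).
under eq_bigr do rewrite exprMn.
by rewrite big_split /= prodrXr -mdegE hm.
Qed.

Section SquareClasses.
Variables (K : fieldType) (n : nat) (Q : {mpoly K[n]}).
Hypothesis hQ : Q \is 2.-homog.

Lemma qimage_square_classes :
  union_of_square_classes (setminus0 (qimage Q (fun _ => True))).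
Proof.
split=> [a [] //|a c [[x [_ ->]] a0] c0].
split; last by rewrite mulf_neq0 ?expf_neq0.
by exists (fun i => c * x i); rewrite meval_homog2_scale // mulrC.
Qed.

Lemma ratio_qimage_square_classes :
  union_of_square_classes (setminus0 (ratio_set (qimage Q (fun _ => True)))).
Proof.
split=> [a [] //|_ c [[_ [_ [[x [_ ->]] [[y [_ ->]] [y0 ->]]]]] a0] c0].
split; last by rewrite mulf_neq0 ?expf_neq0.
exists (Q.@[fun i => c * x i]), Q.@[y]; split; first by exists (fun i => c * x i).
split; first by exists y.
by split=> //; rewrite meval_homog2_scale //; ring.
Qed.

End SquareClasses.

Lemma exists_halfpow_lt (e : rat) : 0 < e -> exists N : nat, 2^-1 ^+ N < e.
Proof.
move=> e0; exists (Num.Def.archi_bound e^-1).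
set N := Num.Def.archi_bound e^-1.
have eN : e^-1 < N%:R by apply: archi_boundP; rewrite invr_ge0 ltW.
have N2N : (N%:R : rat) <= 2 ^+ N by rewrite -natrX ler_nat ltnW // ltn_expl.
rewrite exprVn -[e]invrK ltf_pV2 ?posrE ?exprn_gt0 ?invr_gt0 //.
exact: lt_le_trans eN N2N.
Qed.

Record nonarch_abs (K : fieldType) (v : K -> rat) : Prop := NonarchAbs {
  absv_ge0 : forall x, 0 <= v x;
  absv_eq0 : forall x, v x = 0 <-> x = 0;
  absvM : forall x y, v (x * y) = v x * v y;
  absvD : forall x y, v (x + y) <= Num.max (v x) (v y) }.

Definition cauchy_seq (K : fieldType) (v : K -> rat) (u : nat -> K) : Prop :=
  forall e, 0 < e -> exists N, forall m k, (N <= m)%N -> (N <= k)%N -> v (u m - u k) < e.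

Definition converges_to (K : fieldType) (v : K -> rat) (u : nat -> K) (l : K) : Prop :=
  forall e, 0 < e -> exists N, forall m, (N <= m)%N -> v (u m - l) < e.

Definition complete_abs (K : fieldType) (v : K -> rat) : Prop :=
  forall u, cauchy_seq v u -> exists l, converges_to v u l.

Section NonArchimedean.
Variables (K : fieldType) (v : K -> rat).
Hypothesis hv : nonarch_abs v.

Let v_ge0 := absv_ge0 hv.
Let v_eq0 := absv_eq0 hv.
Let vM := absvM hv.
Let vD := absvD hv.

Lemma absv0 : v 0 = 0. Proof. exact/v_eq0. Qed.

Lemma absv_gt0 x : x != 0 -> 0 < v x.
Proof. by move=> x0; rewrite lt0r v_ge0 andbT; apply: contra_neq x0 => /v_eq0. Qed.

Lemma absv1 : v 1 = 1.
Proof.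
have v11 := vM 1 1; rewrite mulr1 in v11.
by apply: (mulfI (lt0r_neq0 (absv_gt0 (oner_neq0 K)))); rewrite mulr1 -v11.
Qed.

Lemma absvN x : v (- x) = v x.
Proof.
have vN1 : v (-1) = 1.
  apply/eqP; rewrite -(@eqrXn2 _ 2) ?v_ge0 // expr1n expr2 -vM.
  by rewrite mulrNN mulr1 absv1.
by rewrite -mulN1r vM vN1 mul1r.
Qed.

Lemma absv_distC x y : v (x - y) = v (y - x).
Proof. by rewrite -absvN opprB. Qed.

Lemma absvV x : v x^-1 = (v x)^-1.
Proof.
have [->|x0] := eqVneq x 0; first by rewrite invr0 absv0 invr0.
apply: (mulfI (lt0r_neq0 (absv_gt0 x0))).
by rewrite -vM !mulfV ?absv1 ?lt0r_neq0 ?absv_gt0.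
Qed.

Lemma absvD_le x y e : v x <= e -> v y <= e -> v (x + y) <= e.
Proof. by move=> hx hy; apply: le_trans (vD x y) _; rewrite ge_max hx hy. Qed.

Lemma absvD_lt x y e : v x < e -> v y < e -> v (x + y) < e.
Proof. by move=> hx hy; apply: le_lt_trans (vD x y) _; rewrite gt_max hx hy. Qed.

Lemma absv_nat k : v k%:R <= 1.
Proof.
elim: k => [|k IH]; first by rewrite absv0 ler01.
by rewrite -addn1 natrD absvD_le ?absv1.
Qed.

Lemma absv_eq_of_dist_lt a b : v (a - b) < v b -> v a = v b.
Proof.
move=> hab; apply/eqP; rewrite eq_le; apply/andP; split.
  by rewrite -(subrK b a) absvD_le // ltW.
rewrite leNgt; apply/negP => hlt.
have : v (a + (b - a)) < v b by rewrite absvD_lt // absv_distC.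
by rewrite subrKC ltxx.
Qed.

Lemma absv_small_eq0 z : (forall e, 0 < e -> v z < e) -> z = 0.
Proof.
move=> small; apply/eqP; apply: contraT => z0.
by have := small _ (absv_gt0 z0); rewrite ltxx.
Qed.

Lemma divr_continuous (A B : K) e : B != 0 -> 0 < e -> exists2 d, 0 < d &
  forall a b, v (a - A) < d -> v (b - B) < d -> b != 0 /\ v (a / b - A / B) < e.
Proof.
move=> B0 e0; have vB0 := absv_gt0 B0; have vA0 := v_ge0 A.
have S0 : 0 < v A + v B by rewrite ltr_wpDl.
set d := e * (v B * v B) / (v A + v B).
have d0 : 0 < d by rewrite divr_gt0 // !mulr_gt0.
exists (Num.min (v B) d); first by rewrite lt_min vB0.
move=> a b; rewrite !lt_min => /andP[_ ha] /andP[hbB hb].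
have vbB := absv_eq_of_dist_lt hbB.
have b0 : b != 0 by apply: contra_neq (lt0r_neq0 vB0) => b0; rewrite -vbB b0 absv0.
split=> //.
have -> : a / b - A / B = ((a - A) * B - A * (b - B)) / (b * B) by field; apply/andP.
rewrite vM absvV vM vbB ltr_pdivrMr ?mulr_gt0 //.
have -> : e * (v B * v B) = d * (v A + v B) by rewrite /d mulfVK // gt_eqF.
apply: absvD_lt; rewrite ?absvN vM.
- by apply: (@lt_le_trans _ _ (d * v B)); rewrite ?ltr_pM2r ?ler_pM2l ?lerDr.
- apply: (@le_lt_trans _ _ (v A * d)); first by rewrite ler_wpM2l // ltW.
  by rewrite mulrC ltr_pM2l // ltrDl.
Qed.

Variable n : nat.

Definition continuous_at (f : ('I_n -> K) -> K) (x : 'I_n -> K) : Prop :=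
  forall e, 0 < e -> exists2 d, 0 < d &
    forall y, (forall i, v (y i - x i) < d) -> v (f y - f x) < e.

Lemma continuous_at_ext f g x : f =1 g -> continuous_at f x -> continuous_at g x.
Proof.
move=> fg hf e e0; have [d d0 hd] := hf e e0.
by exists d => // y hy; rewrite -!fg; apply: hd.
Qed.

Lemma continuous_at_cst c x : continuous_at (fun _ => c) x.
Proof. by move=> e e0; exists 1 => // y _; rewrite subrr absv0. Qed.

Lemma continuous_at_proj i x : continuous_at (fun y => y i) x.
Proof. by move=> e e0; exists e. Qed.

Lemma continuous_atD f g x : continuous_at f x -> continuous_at g x ->
  continuous_at (fun y => f y + g y) x.
Proof.
move=> hf hg e e0; have [d1 d10 h1] := hf e e0; have [d2 d20 h2] := hg e e0.
exists (Num.min d1 d2) => [|y hy]; first by rewrite lt_min d10 d20.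
rewrite opprD addrACA; apply: absvD_lt; [apply: h1 | apply: h2] => i;
  by have := hy i; rewrite lt_min => /andP[].
Qed.

Lemma continuous_atM f g x : continuous_at f x -> continuous_at g x ->
  continuous_at (fun y => f y * g y) x.
Proof.
move=> hf hg e e0.
set M := v (f x) + v (g x) + 2.
have M0 : 0 < M by rewrite /M ltr_wpDl ?addr_ge0.
set e1 := Num.min 1 (e / M).
have e10 : 0 < e1 by rewrite lt_min ltr01 divr_gt0.
have [d1 d10 h1] := hf e1 e10; have [d2 d20 h2] := hg e1 e10.
exists (Num.min d1 d2) => [|y hy]; first by rewrite lt_min d10 d20.
have hf1 : v (f y - f x) < e1 by apply: h1 => i; have := hy i; rewrite lt_min => /andP[].
have hg1 : v (g y - g x) < e1 by apply: h2 => i; have := hy i; rewrite lt_min => /andP[].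
have e1le1 : e1 <= 1 by rewrite ge_min lexx.
have e1M : e1 * M <= e by rewrite -ler_pdivlMr // ge_min lexx orbT.
have hgy : v (g y) <= v (g x) + 1.
  rewrite -(subrK (g x) (g y)); apply: absvD_le.
    by rewrite ler_wpDl // ltW // (lt_le_trans hg1 e1le1).
  by rewrite lerDl ler01.
have -> : f y * g y - f x * g x = (f y - f x) * g y + f x * (g y - g x) by ring.
apply: lt_le_trans e1M; apply: absvD_lt; rewrite vM.
- apply: (@le_lt_trans _ _ (e1 * v (g y))); first by rewrite ler_wpM2r // ltW.
  rewrite ltr_pM2l //; apply: le_lt_trans hgy _.
  by have := v_ge0 (f x); rewrite /M; lra.
- apply: (@le_lt_trans _ _ (v (f x) * e1)); first by rewrite ler_wpM2l // ltW.
  rewrite mulrC ltr_pM2l //.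
  by have := v_ge0 (g x); rewrite /M; lra.
Qed.

Lemma continuous_at_sum (I : Type) (s : seq I) (F : I -> ('I_n -> K) -> K) x :
  (forall i, continuous_at (F i) x) -> continuous_at (fun y => \sum_(i <- s) F i y) x.
Proof.
move=> hF; elim: s => [|a s IH].
  by apply: continuous_at_ext (continuous_at_cst 0 x) => y; rewrite big_nil.
by apply: continuous_at_ext (continuous_atD (hF a) IH) => y; rewrite big_cons.
Qed.

Lemma continuous_at_prod (I : Type) (s : seq I) (F : I -> ('I_n -> K) -> K) x :
  (forall i, continuous_at (F i) x) -> continuous_at (fun y => \prod_(i <- s) F i y) x.
Proof.
move=> hF; elim: s => [|a s IH].
  by apply: continuous_at_ext (continuous_at_cst 1 x) => y; rewrite big_nil.
by apply: continuous_at_ext (continuous_atM (hF a) IH) => y; rewrite big_cons.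
Qed.

Lemma continuous_atX f k x : continuous_at f x -> continuous_at (fun y => f y ^+ k) x.
Proof.
move=> hf; elim: k => [|k IH].
  by apply: continuous_at_ext (continuous_at_cst 1 x) => y; rewrite expr0.
by apply: continuous_at_ext (continuous_atM hf IH) => y; rewrite exprS.
Qed.

Lemma continuous_meval (Q : {mpoly K[n]}) x : continuous_at (fun y => Q.@[y]) x.
Proof.
apply: (@continuous_at_ext (fun y => \sum_(m <- msupp Q) Q@_m * \prod_i y i ^+ m i)).
  by move=> y; rewrite mevalE.
apply: continuous_at_sum => m; apply: continuous_atM; first exact: continuous_at_cst.
by apply: continuous_at_prod => i; apply: continuous_atX; apply: continuous_at_proj.
Qed.

Section Complete.
Hypothesis hcompl : complete_abs v.

Lemma cauchy_of_halving_steps (u : nat -> K) :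
  (forall k, v (u k.+1 - u k) <= 2^-1 ^+ k) -> cauchy_seq v u.
Proof.
move=> hstep.
have halfpow_le k j : (2^-1 : rat) ^+ (k + j) <= 2^-1 ^+ k.
  by apply: ler_wiXn2l; rewrite ?invr_ge0 ?invf_le1 ?ler0n ?ler1n ?leq_addr.
have tail k j : v (u (k + j)%N - u k) <= 2^-1 ^+ k.
  elim: j => [|j IH]; first by rewrite addn0 subrr absv0 exprn_ge0.
  rewrite -(subrK (u (k + j)%N) (u _)) -addrA addnS.
  by apply: absvD_le => //; apply: le_trans (hstep _) (halfpow_le _ _).
move=> e e0; have [N hN] := exists_halfpow_lt e0; exists N => m k hm hk.
have near i : (N <= i)%N -> v (u i - u N) < e.
  by move=> hi; rewrite -(subnKC hi); apply: le_lt_trans (tail _ _) hN.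
have -> : u m - u k = (u m - u N) - (u k - u N) by ring.
by apply: absvD_lt; rewrite ?absvN; apply: near.
Qed.

Section SquareRoot.
Variable c : K.
Hypothesis hc : v c <= 2^-1.

Let a k := iter k (fun t => c - t ^+ 2) 0.

Let aS k : a k.+1 = c - a k ^+ 2. Proof. by []. Qed.

Lemma sqrt_iter_small k : v (a k) <= 2^-1.
Proof.
elim: k => [|k IH]; first by rewrite absv0 invr_ge0 ler0n.
rewrite aS absvD_le // absvN expr2 vM.
by apply: le_trans (ler_pM (v_ge0 _) (v_ge0 _) IH IH) _; lra.
Qed.

Lemma sqrt_iter_step k : v (a k.+1 - a k) <= 2^-1 ^+ k.
Proof.
elim: k => [|k IH].
  by rewrite aS /a /= expr0n !subr0 expr0; apply: le_trans hc _; lra.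
have -> : a k.+2 - a k.+1 = (a k - a k.+1) * (a k + a k.+1).
  by rewrite (aS k.+1) (aS k); ring.
rewrite vM exprSr absv_distC; apply: ler_pM; rewrite ?v_ge0 //.
by apply: absvD_le; apply: sqrt_iter_small.
Qed.

Lemma sqrt_iter_limit l : converges_to v a l -> l + l ^+ 2 = c.
Proof.
move=> lim_l; apply/eqP; rewrite -subr_eq0; apply/eqP; apply: absv_small_eq0 => e e0.
have e1 : 0 < Num.min e 1 by rewrite lt_min e0 ltr01.
have [N hN] := lim_l _ e1.
have /andP[hN1 _] : (v (a N.+1 - l) < e) && (v (a N.+1 - l) < 1).
  by rewrite -lt_min; apply: hN.
have /andP[hN0 hN0_lt1] : (v (a N - l) < e) && (v (a N - l) < 1).
  by rewrite -lt_min; apply: hN.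
have -> : l + l ^+ 2 - c = - (a N.+1 - l) + (l - a N) * (l + a N) by rewrite aS; ring.
apply: absvD_lt; first by rewrite absvN.
have small_sum : v (l + a N) <= 1.
  have -> : l + a N = - (a N - l) + (a N + a N) by ring.
  have aN_small : v (a N) <= 1 by apply: le_trans (sqrt_iter_small N) _; lra.
  by apply: absvD_le; [rewrite absvN (ltW hN0_lt1) | apply: absvD_le].
rewrite vM absv_distC; apply: le_lt_trans hN0.
by rewrite -[leRHS]mulr1 ler_wpM2l.
Qed.

Lemma sqr_one_add4 : exists s, s ^+ 2 = 1 + 4%:R * c.
Proof.
have [l lim_l] := hcompl (cauchy_of_halving_steps sqrt_iter_step).
by exists (1 + 2%:R * l); rewrite -(sqrt_iter_limit lim_l); ring.
Qed.

End SquareRoot.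

Lemma square_class_of_near y z : (4%:R : K) != 0 -> y != 0 ->
  v (y - z) <= 2^-1 * v 4%:R * v y -> exists s, y = z * s ^+ 2.
Proof.
move=> h4 y0 hyz.
have vy0 := absv_gt0 y0; have v40 := absv_gt0 h4; have v41 := absv_nat 4.
have vz : v z = v y.
  by apply: absv_eq_of_dist_lt; rewrite absv_distC; apply: le_lt_trans hyz _; nra.
have z0 : z != 0 by apply: contra_neq (lt0r_neq0 vy0) => z0; rewrite -vz z0 absv0.
have [|s hs] := @sqr_one_add4 ((y - z) / (4%:R * z)).
  by rewrite vM absvV vM vz ler_pdivrMr ?mulr_gt0 // mulrA.
by exists s; rewrite hs; field; rewrite h4 z0.
Qed.

End Complete.
End NonArchimedean.

Lemma int_points_of_coord (K : fieldType) n (x : 'I_n -> K) :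
  (forall i, exists z : int, x i = z%:~R) -> int_points x.
Proof. by case/fin_all_exists=> z hz; exists z. Qed.

Section Qp.
Variables (p : nat) (K : fieldType) (v : K -> rat).
Hypotheses (p_gt0 : (0 < p)%N) (hK : is_Qp p v).

Let hv : nonarch_abs v.
Proof. by case: hK => [[? ?] [? [? _]]]; split. Qed.

Let hcompl : complete_abs v.
Proof. by case: hK => [_ [_ [_ [_ [? _]]]]]. Qed.

Lemma ratr_Qp_eq0 (q : rat) : (ratr q == 0 :> K) = (q == 0).
Proof.
apply/idP/idP => [|/eqP ->]; last by rewrite -(mulr0z 1) ratr_int mulr0z.
apply: contraLR => q0; apply/eqP => /(f_equal v).
case: hK => [_ [_ [_ [-> _]]]]; rewrite (absv0 hv) /padic_abs_rat (negbTE q0).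
by move/eqP; rewrite expfz_eq0 pnatr_eq0 gtn_eqF ?andbF.
Qed.

Lemma rat_vector_approx n (x : 'I_n -> K) d : 0 < d ->
  exists q : 'I_n -> rat, forall i, v (ratr (q i) - x i) < d.
Proof.
move=> d0; case: hK => [_ [_ [_ [_ [_ dense]]]]].
have near_rat i : exists q : rat, v (ratr q - x i) < d.
  by have [q hq] := dense (x i) d d0; exists q; rewrite absv_distC.
by have [q hq] := fin_all_exists near_rat; exists q.
Qed.

Lemma rat_vector_denom n (q : 'I_n -> rat) : exists2 d : int, d != 0 &
  forall i, exists z : int, d%:~R * ratr (q i) = z%:~R :> K.
Proof.
exists (\prod_j denq (q j)); first by apply/prodf_neq0 => j _; apply: denq_neq0.
move=> i; exists (numq (q i) * \prod_(j | j != i) denq (q j)).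
have di0 : (denq (q i))%:~R != 0 :> K by rewrite -ratr_int ratr_Qp_eq0 intr_eq0 denq_neq0.
by rewrite (bigD1 i) //= /ratr !intrM; field.
Qed.

Lemma ratio_rat_points_int n (Q : {mpoly K[n]}) (qa qb : 'I_n -> rat) :
  Q \is 2.-homog -> Q.@[fun i => ratr (qb i)] != 0 ->
  ratio_set (qimage Q (@int_points K n))
    (Q.@[fun i => ratr (qa i)] / Q.@[fun i => ratr (qb i)]).
Proof.
move=> hQ qb0.
have [da da0 hda] := rat_vector_denom qa; have [db db0 hdb] := rat_vector_denom qb.
set c : K := (da * db)%:~R.
have c0 : c != 0 by rewrite /c -ratr_int ratr_Qp_eq0 intr_eq0 mulf_neq0.
exists Q.@[fun i => c * ratr (qa i)], Q.@[fun i => c * ratr (qb i)].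
split.
  exists (fun i => c * ratr (qa i)); split=> //; apply: int_points_of_coord => i.
  by have [z hz] := hda i; exists (db * z); rewrite /c !intrM -hz; ring.
split.
  exists (fun i => c * ratr (qb i)); split=> //; apply: int_points_of_coord => i.
  by have [z hz] := hdb i; exists (da * z); rewrite /c !intrM -hz; ring.
rewrite !meval_homog2_scale // mulf_neq0 ?expf_neq0 //; split=> //.
by rewrite -mulf_div divff ?mul1r ?expf_neq0.
Qed.

Lemma dense_of_ratio_set_full n (Q : {mpoly K[n]}) : Q \is 2.-homog ->
  (forall y, ratio_set (qimage Q (fun _ => True)) y) ->
  dense_for v (ratio_set (qimage Q (@int_points K n))).
Proof.
move=> hQ full x e e0.
have [_ [_ [[ua [_ ->]] [[ub [_ ->]] [ub0 ->]]]]] := full x.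
have [d d0 hd] := divr_continuous hv Q.@[ua] ub0 e0.
have [da da0 hda] := continuous_meval hv Q ua d0.
have [db db0 hdb] := continuous_meval hv Q ub d0.
have [qa hqa] := rat_vector_approx ua da0; have [qb hqb] := rat_vector_approx ub db0.
have [qb0 close] := hd _ _ (hda _ hqa) (hdb _ hqb).
exists (Q.@[fun i => ratr (qa i)] / Q.@[fun i => ratr (qb i)]).
by split; [apply: ratio_rat_points_int | rewrite absv_distC].
Qed.

Lemma ratio_set_full_of_dense n (Q : {mpoly K[n]}) : Q \is 2.-homog ->
  dense_for v (ratio_set (qimage Q (@int_points K n))) ->
  forall y, ratio_set (qimage Q (fun _ => True)) y.
Proof.
move=> hQ dense y.
have [->|y0] := eqVneq y 0.
  have [_ [[_ [_ [_ [[xb [_ ->]] [xb0 _]]]]] _]] := dense 0 1 ltr01.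
  exists Q.@[fun i => 0 * xb i], Q.@[xb].
  split; first by exists (fun i => 0 * xb i).
  split; first by exists xb.
  by split=> //; rewrite meval_homog2_scale // expr0n !mul0r.
have h4 : (4%:R : K) != 0 by rewrite -ratr_nat ratr_Qp_eq0 pnatr_eq0.
have e0 : 0 < 2^-1 * v 4%:R * v y by rewrite !mulr_gt0 ?invr_gt0 ?ltr0n ?absv_gt0.
have [_ [[_ [_ [[xa [_ ->]] [[xb [_ ->]] [xb0 ->]]]]] close]] := dense y _ e0.
have [s ->] := square_class_of_near hv hcompl h4 y0 (ltW close).
exists Q.@[fun i => s * xa i], Q.@[xb].
split; first by exists (fun i => s * xa i).
split; first by exists xb.
by split=> //; rewrite meval_homog2_scale // mulrAC [s ^+ 2 * _]mulrC.
Qed.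

End Qp.

Theorem lemma3 (p : nat) (hp : prime p) (K : fieldType) (v : K -> rat)
  (hK : @is_Qp p K v) (n : nat) (Q : {mpoly K[n]}) (hQ : quadratic_form Q) :
  [/\ union_of_square_classes (setminus0 (qimage Q (fun _ => True))),
      union_of_square_classes (setminus0 (ratio_set (qimage Q (fun _ => True))))
    & (dense_for v (ratio_set (qimage Q (@int_points K n)))
       <-> (forall y : K, ratio_set (qimage Q (fun _ => True)) y))].
Proof.
have [_ hQ2] := hQ; have p_gt0 := prime_gt0 hp.
split; [exact: qimage_square_classes hQ2 | exact: ratio_qimage_square_classes hQ2 |].
split=> [dense | full].
- exact: (ratio_set_full_of_dense p_gt0 hK hQ2 dense).
- exact: (dense_of_ratio_set_full p_gt0 hK hQ2 full).
Qed.
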